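(* Let $n\ge3$, $N=2n+1$, $R=2n$, and for $r\in[R]$ let $F_r:2^{[N]}\to\mathbb{R}$ be given by $F_r(S)=1$ if $|S\cap\{r,r+1\}|=1$ and $F_r(S)=0$ otherwise (so $F_r$ is incident exactly to $\{r,r+1\}$, and $\|\mu\|_1=4n$). For this instance, let $\ell_*$ be the supremum of all $\ell\ge0$ such that for every $y\in\mathcal{B}$, $\|Ay-Ay^*\|_2^2\ge\ell\,\|y^*-y\|_2^2$, where $y^*=\arg\min_{z\in\Xi}\|z-y\|_2^2$. Then $\ell_*<7/N^2$.
   Context: For each $r$, $\mathcal{B}_r=\{u\in\mathbb{R}^N:\sum_{i\in S}u_i\le F_r(S)\ \forall S\subseteq[N],\ \sum_{i\in[N]}u_i=F_r([N])\}$ is the base polytope of $F_r$, $\mathcal{B}=\mathcal{B}_1\times\cdots\times\mathcal{B}_R\subseteq(\mathbb{R}^N)^R$, and $A:(\mathbb{R}^N)^R\to\mathbb{R}^N$, $Ay=\sum_ry_r$; $\|y\|_2^2=\sum_r\|y_r\|_2^2$. $\Xi$ is the set of minimizers of $\|Ay\|_2^2$ over $\mathcal{B}$. $\mu_i$ is the number of $r$ such that $F_r$ depends on element $i$. *)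

From Stdlib Require Import Reals List Arith.
Import ListNotations.
Open Scope R_scope.

Definition sumN (m : nat) (f : nat -> R) : R :=
  fold_right Rplus 0 (map f (seq 0 m)).

(* Instance parameters (0-based indices): ground set [N] = {0,...,N-1},
   components r in {0,...,R-1}. *)
Definition Nn (n : nat) : nat := (2 * n + 1)%nat.
Definition Rn (n : nat) : nat := (2 * n)%nat.

(* Subsets of the ground set are boolean predicates on nat (only the values
   on {0,...,N-1} matter).  F_r(S) = 1 iff |S ∩ {r, r+1}| = 1. *)
Definition Fr (r : nat) (S : nat -> bool) : R :=
  if xorb (S r) (S (r + 1)%nat) then 1 else 0.

Definition in_base (n r : nat) (u : nat -> R) : Prop :=
  (forall S : nat -> bool,
      sumN (Nn n) (fun i => if S i then u i else 0) <= Fr r S) /\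
  sumN (Nn n) u = Fr r (fun i => Nat.ltb i (Nn n)).

(* y in (R^N)^R is a function y r i. *)
Definition inB (n : nat) (y : nat -> nat -> R) : Prop :=
  forall r, (r < Rn n)%nat -> in_base n r (y r).

Definition Aop (n : nat) (y : nat -> nat -> R) : nat -> R :=
  fun i => sumN (Rn n) (fun r => y r i).

Definition nsqN (n : nat) (v : nat -> R) : R :=
  sumN (Nn n) (fun i => (v i) ^ 2).

Definition dist2 (n : nat) (y z : nat -> nat -> R) : R :=
  sumN (Rn n) (fun r => sumN (Nn n) (fun i => (y r i - z r i) ^ 2)).

Definition inXi (n : nat) (z : nat -> nat -> R) : Prop :=
  inB n z /\ forall y, inB n y -> nsqN n (Aop n z) <= nsqN n (Aop n y).

Definition is_proj (n : nat) (ys y : nat -> nat -> R) : Prop :=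
  inXi n ys /\ forall z, inXi n z -> dist2 n ys y <= dist2 n z y.

Definition admissible (n : nat) (l : R) : Prop :=
  0 <= l /\
  forall y ys, inB n y -> is_proj n ys y ->
    nsqN n (fun i => Aop n y i - Aop n ys i) >= l * dist2 n ys y.

(* Only [y = 0] has [Ay = 0] in B: along the path the coordinates of [Ay] telescope,
   [(Ay)_0 = y_0(0)] and [(Ay)_(k+1) = y_(k+1)(k+1) - y_k(k)].  Hence Ξ = {0}, the
   projection y* of every y is 0, and every admissible ℓ satisfies ℓ ‖y‖² <= ‖Ay‖².
   Testing with [y_r = t_r (e_r - e_(r+1))] for the tent profile
   [t_r = min(r + 1, 2n - r) / n] gives ‖Ay‖² <= N / n² (consecutive t_r differ by
   at most 1/n) and ‖y‖² = 2 (n + 1) N / (3 n), so ℓ_* <= 3 / (2 n (n + 1)) < 7 / N². *)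
From Stdlib Require Import Reals Lra Lia List Arith.
Open Scope R_scope.

Lemma fold_right_Rplus_init a l : fold_right Rplus a l = fold_right Rplus 0 l + a.
Proof. induction l as [|x l IH]; simpl; [lra | rewrite IH; lra]. Qed.

Lemma sumN_S m f : sumN (S m) f = sumN m f + f m.
Proof.
  unfold sumN. rewrite seq_S, map_app, fold_right_app; simpl.
  rewrite fold_right_Rplus_init. lra.
Qed.

Lemma sumN_shift m f : sumN (S m) f = f 0%nat + sumN m (fun k => f (S k)).
Proof. unfold sumN; simpl. rewrite <- seq_shift, map_map. reflexivity. Qed.

Lemma sumN_ext m f g :
  (forall i, (i < m)%nat -> f i = g i) -> sumN m f = sumN m g.
Proof. induction m; intros H; [reflexivity|]. rewrite !sumN_S, IHm, H; auto. Qed.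

Lemma sumN_plus m f g : sumN m (fun i => f i + g i) = sumN m f + sumN m g.
Proof. induction m; [unfold sumN; simpl; lra|]. rewrite !sumN_S, IHm; lra. Qed.

Lemma sumN_scal m c f : sumN m (fun i => c * f i) = c * sumN m f.
Proof. induction m; [unfold sumN; simpl; lra|]. rewrite !sumN_S, IHm; lra. Qed.

Lemma sumN_const m c : sumN m (fun _ => c) = INR m * c.
Proof.
  induction m; [unfold sumN; simpl; lra|]. rewrite !sumN_S, IHm, S_INR; lra.
Qed.

Lemma sumN_le m f g :
  (forall i, (i < m)%nat -> f i <= g i) -> sumN m f <= sumN m g.
Proof.
  induction m; intros H; [unfold sumN; simpl; lra|]. rewrite !sumN_S.
  assert (f m <= g m) by auto. assert (sumN m f <= sumN m g) by auto. lra.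
Qed.

Lemma sumN_ge0 m f : (forall i, (i < m)%nat -> 0 <= f i) -> 0 <= sumN m f.
Proof. intros H. rewrite <- (Rmult_0_r (INR m)), <- sumN_const. now apply sumN_le. Qed.

Lemma sumN_add a b f :
  sumN (a + b) f = sumN a f + sumN b (fun k => f (a + k)%nat).
Proof.
  induction b.
  - rewrite Nat.add_0_r. unfold sumN at 3; simpl; lra.
  - rewrite Nat.add_succ_r, !sumN_S, IHb. lra.
Qed.

Lemma sumN_eq0 m f : (forall i, (i < m)%nat -> f i = 0) -> sumN m f = 0.
Proof. intros H. rewrite (sumN_ext _ _ (fun _ => 0)), sumN_const; [lra | exact H]. Qed.

Lemma sumN_single m f a : (a < m)%nat ->
  (forall j, (j < m)%nat -> j <> a -> f j = 0) -> sumN m f = f a.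
Proof.
  induction m; intros Ha H; [lia|]. rewrite sumN_S.
  destruct (Nat.eq_dec a m) as [->|Ham].
  - rewrite sumN_eq0; [lra|]. intros j Hj. apply H; lia.
  - rewrite (H m) by lia. rewrite IHm; [lra | lia |].
    intros j Hj Hja. apply H; lia.
Qed.

Lemma sumN_pair m f a b : (a < m)%nat -> (b < m)%nat -> a <> b ->
  (forall j, (j < m)%nat -> j <> a -> j <> b -> f j = 0) -> sumN m f = f a + f b.
Proof.
  induction m; intros Ha Hb Hab H; [lia|]. rewrite sumN_S.
  destruct (Nat.eq_dec a m) as [->|Ham]; [|destruct (Nat.eq_dec b m) as [->|Hbm]].
  - rewrite (sumN_single _ _ b); [lra|lia|]. intros j Hj Hjb. apply H; lia.
  - rewrite (sumN_single _ _ a); [lra|lia|]. intros j Hj Hja. apply H; lia.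
  - rewrite (H m) by lia. rewrite IHm; [lra | lia | lia | lia |].
    intros j Hj Hja Hjb. apply H; lia.
Qed.

Lemma sumN_sq_eq0 m f :
  sumN m (fun i => f i ^ 2) <= 0 -> forall i, (i < m)%nat -> f i = 0.
Proof.
  induction m; intros H i Hi; [lia|]. rewrite sumN_S in H.
  assert (0 <= sumN m (fun i => f i ^ 2)) by (apply sumN_ge0; intros; apply pow2_ge_0).
  assert (0 <= f m ^ 2) by apply pow2_ge_0.
  destruct (Nat.eq_dec i m) as [->|]; [nra | apply IHm; [lra | lia]].
Qed.

Lemma sumN_sq_succ m :
  sumN m (fun k => (INR k + 1) ^ 2) = INR m * (INR m + 1) * (2 * INR m + 1) / 6.
Proof. induction m; [unfold sumN; simpl; lra|]. rewrite sumN_S, IHm, S_INR. field. Qed.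

Lemma sumN_sq_rev m :
  sumN m (fun k => (INR m - INR k) ^ 2) = INR m * (INR m + 1) * (2 * INR m + 1) / 6.
Proof.
  induction m; [unfold sumN; simpl; lra|]. rewrite sumN_shift.
  rewrite (sumN_ext _ _ (fun k => (INR m - INR k) ^ 2)).
  - rewrite IHm, S_INR; simpl (INR 0). field.
  - intros i _. rewrite !S_INR. ring.
Qed.

Lemma div_unit_interval a x : 0 < x -> 0 <= a <= x -> 0 <= a / x <= 1.
Proof.
  intros Hx Ha. split; apply (Rmult_le_reg_r x); try exact Hx;
    replace (a / x * x) with a by (field; lra); lra.
Qed.

Lemma sq_diff_div_le a b x : 0 < x -> (a - b) ^ 2 <= 1 -> (a / x - b / x) ^ 2 <= 1 / x ^ 2.
Proof.
  intros Hx Hab. replace ((a / x - b / x) ^ 2) with ((a - b) ^ 2 * (1 / x ^ 2)) by (field; lra).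
  assert (0 < 1 / x ^ 2) by (apply Rdiv_lt_0_compat; [lra | apply pow_lt; exact Hx]).
  nra.
Qed.

Lemma INR_Nn n : INR (Nn n) = 2 * INR n + 1.
Proof. unfold Nn. rewrite plus_INR, mult_INR. simpl. lra. Qed.

Lemma Fr_ge0 r S : 0 <= Fr r S.
Proof. unfold Fr. destruct (xorb _ _); lra. Qed.

Lemma Fr_ground n r : (r < Rn n)%nat -> Fr r (fun i => Nat.ltb i (Nn n)) = 0.
Proof.
  intros Hr. unfold Fr, Rn, Nn in *.
  rewrite (proj2 (Nat.ltb_lt r _)), (proj2 (Nat.ltb_lt (r + 1) _)) by lia.
  reflexivity.
Qed.

Lemma sumN_indicator m (S : nat -> bool) u :
  sumN m u = sumN m (fun i => if S i then u i else 0)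
           + sumN m (fun i => if negb (S i) then u i else 0).
Proof. rewrite <- sumN_plus. apply sumN_ext. intros i _. destruct (S i); simpl; lra. Qed.

(* Testing [S = {i}] and its complement: both have [F_r = 0] when [i] is not an endpoint of the edge. *)
Lemma in_base_off_edge n r u i : (r < Rn n)%nat -> in_base n r u ->
  (i < Nn n)%nat -> i <> r -> i <> (r + 1)%nat -> u i = 0.
Proof.
  intros Hr [Hle Hsum] Hi Hir Hir1.
  rewrite Fr_ground in Hsum by exact Hr.
  pose (S := fun j => Nat.eqb j i).
  assert (HSr : S r = false) by (apply Nat.eqb_neq; auto).
  assert (HSr1 : S (r + 1)%nat = false) by (apply Nat.eqb_neq; auto).
  assert (Hsingle : sumN (Nn n) (fun j => if S j then u j else 0) = u i).
  { rewrite (sumN_single _ _ i Hi); unfold S; [now rewrite Nat.eqb_refl |].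
    intros j _ Hj. now rewrite (proj2 (Nat.eqb_neq j i) Hj). }
  pose proof (Hle S) as HS. pose proof (Hle (fun j => negb (S j))) as HSc.
  unfold Fr in HS, HSc. rewrite HSr, HSr1 in HS, HSc. simpl in HS, HSc.
  rewrite (sumN_indicator _ S) in Hsum. lra.
Qed.

Lemma in_base_edge n r u : (r < Rn n)%nat -> in_base n r u -> u (r + 1)%nat = - u r.
Proof.
  intros Hr Hu. pose proof (proj2 Hu) as Hsum.
  rewrite Fr_ground in Hsum by exact Hr.
  rewrite (sumN_pair _ _ r (r + 1)) in Hsum; unfold Rn, Nn in *; try lia.
  - lra.
  - intros j Hj H1 H2. apply (in_base_off_edge n r); unfold Rn, Nn; auto; lia.
Qed.

Definition yzero : nat -> nat -> R := fun _ _ => 0.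

Lemma Aop_yzero n i : Aop n yzero i = 0.
Proof. unfold Aop, yzero. now apply sumN_eq0. Qed.

Lemma yzero_inB n : inB n yzero.
Proof.
  intros r Hr. unfold yzero. split.
  - intros S. rewrite sumN_eq0; [apply Fr_ge0 |]. intros i _. now destruct (S i).
  - rewrite Fr_ground by exact Hr. now apply sumN_eq0.
Qed.

Lemma nsqN_yzero n : nsqN n (Aop n yzero) = 0.
Proof. apply sumN_eq0. intros i _. rewrite Aop_yzero. ring. Qed.

Lemma nsqN_ge0 n v : 0 <= nsqN n v.
Proof. apply sumN_ge0. intros; apply pow2_ge_0. Qed.

Lemma inB_Aop_eq0 n z : inB n z -> (forall i, (i < Nn n)%nat -> Aop n z i = 0) ->
  forall r i, (r < Rn n)%nat -> (i < Nn n)%nat -> z r i = 0.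
Proof.
  intros HB HA.
  assert (Hoff : forall r i, (r < Rn n)%nat -> (i < Nn n)%nat -> i <> r -> i <> (r + 1)%nat ->
                 z r i = 0) by (intros r i Hr; apply (in_base_off_edge n r); auto).
  assert (Hedge : forall r, (r < Rn n)%nat -> z r (r + 1)%nat = - z r r)
    by (intros r Hr; apply (in_base_edge n r); auto).
  assert (Hdiag : forall k, (k < Rn n)%nat -> z k k = 0).
  { induction k as [|k IH]; intros Hk.
    - specialize (HA 0%nat ltac:(unfold Rn, Nn in *; lia)). unfold Aop in HA.
      rewrite (sumN_single _ _ 0%nat Hk) in HA; [exact HA |].
      intros j Hj Hj0. apply Hoff; unfold Rn, Nn in *; lia.
    - specialize (HA (S k) ltac:(unfold Rn, Nn in *; lia)). unfold Aop in HA.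
      rewrite (sumN_pair _ _ (S k) k) in HA; try lia.
      + pose proof (Hedge k ltac:(lia)) as E. rewrite Nat.add_1_r in E.
        rewrite E, IH in HA by lia. lra.
      + intros j Hj H1 H2. apply Hoff; unfold Rn, Nn in *; lia. }
  intros r i Hr Hi.
  destruct (Nat.eq_dec i r) as [->|Hir]; [auto |].
  destruct (Nat.eq_dec i (r + 1)) as [->|Hir1]; [rewrite Hedge, Hdiag by exact Hr; lra |].
  auto.
Qed.

Lemma inXi_eq0 n z : inXi n z ->
  forall r i, (r < Rn n)%nat -> (i < Nn n)%nat -> z r i = 0.
Proof.
  intros [HB Hmin]. apply inB_Aop_eq0; [exact HB |]. apply sumN_sq_eq0.
  rewrite <- (nsqN_yzero n). exact (Hmin yzero (yzero_inB n)).
Qed.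

Lemma is_proj_yzero n y : is_proj n yzero y.
Proof.
  split.
  - split; [apply yzero_inB |]. intros y' _. rewrite nsqN_yzero. apply nsqN_ge0.
  - intros z Hz. apply Req_le. unfold dist2.
    apply sumN_ext; intros r Hr; apply sumN_ext; intros i Hi.
    now rewrite (inXi_eq0 n z Hz r i Hr Hi).
Qed.

Lemma admissible_test n l y : admissible n l -> inB n y ->
  l * dist2 n yzero y <= nsqN n (Aop n y).
Proof.
  intros [_ Hl] Hy. pose proof (Hl y yzero Hy (is_proj_yzero n y)) as H.
  unfold nsqN in *. rewrite (sumN_ext _ _ (fun i => Aop n y i ^ 2)) in H; [lra |].
  intros i _. now rewrite Aop_yzero, Rminus_0_r.
Qed.

Lemma admissible_0 n : admissible n 0.
Proof. split; [lra |]. intros y ys _ _. rewrite Rmult_0_l. apply Rle_ge, nsqN_ge0. Qed.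

Definition chain (t : nat -> R) : nat -> nat -> R := fun r i =>
  if Nat.eqb i r then t r else if Nat.eqb i (r + 1) then - t r else 0.

Lemma chain_diag t r : chain t r r = t r.
Proof. unfold chain. now rewrite Nat.eqb_refl. Qed.

Lemma chain_next t r : chain t r (r + 1)%nat = - t r.
Proof.
  unfold chain. rewrite (proj2 (Nat.eqb_neq (r + 1) r)) by lia.
  now rewrite Nat.eqb_refl.
Qed.

Lemma chain_off t r i : i <> r -> i <> (r + 1)%nat -> chain t r i = 0.
Proof.
  intros H1 H2. unfold chain.
  now rewrite (proj2 (Nat.eqb_neq _ _) H1), (proj2 (Nat.eqb_neq _ _) H2).
Qed.

Lemma chain_inB n t : (forall r, (r < Rn n)%nat -> 0 <= t r <= 1) -> inB n (chain t).
Proof.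
  intros Ht r Hr. pose proof (Ht r Hr) as Htr.
  assert (Hpair : forall g : nat -> R, (forall j, j <> r -> j <> (r + 1)%nat -> g j = 0) ->
                  sumN (Nn n) g = g r + g (r + 1)%nat).
  { intros g Hg. apply sumN_pair; unfold Rn, Nn in *; try lia. intros j _; apply Hg. }
  split.
  - intros S. rewrite Hpair by (intros j H1 H2; rewrite chain_off by assumption; now destruct (S j)).
    rewrite chain_diag, chain_next. unfold Fr. destruct (S r), (S (r + 1)%nat); simpl; lra.
  - rewrite Fr_ground, Hpair by (exact Hr || (intros; now apply chain_off)).
    rewrite chain_diag, chain_next. ring.
Qed.

Lemma dist2_yzero_chain n t :
  dist2 n yzero (chain t) = 2 * sumN (Rn n) (fun r => t r ^ 2).
Proof.
  unfold dist2. rewrite <- sumN_scal. apply sumN_ext. intros r Hr.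
  rewrite (sumN_pair _ _ r (r + 1)); unfold Rn, Nn in *; try lia.
  - unfold yzero. rewrite chain_diag, chain_next. ring.
  - intros j _ H1 H2. unfold yzero. rewrite chain_off by assumption. ring.
Qed.

Lemma Aop_chain_0 n t : (0 < Rn n)%nat -> Aop n (chain t) 0 = t 0%nat.
Proof.
  intros H. unfold Aop. rewrite (sumN_single _ _ 0%nat H); [apply chain_diag |].
  intros j _ Hj. apply chain_off; lia.
Qed.

Lemma Aop_chain_S n t k : (S k < Nn n)%nat -> t (Rn n) = 0 ->
  Aop n (chain t) (S k) = t (S k) - t k.
Proof.
  intros Hk Hend. unfold Aop.
  assert (Hnext : chain t k (S k) = - t k) by (rewrite <- Nat.add_1_r; apply chain_next).
  destruct (Nat.eq_dec (S k) (Rn n)) as [E|E].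
  - rewrite (sumN_single _ _ k); [rewrite Hnext, E, Hend; ring | lia |].
    intros j Hj Hjk. apply chain_off; lia.
  - rewrite (sumN_pair _ _ (S k) k); unfold Rn, Nn in *; try lia.
    + rewrite Hnext, chain_diag. ring.
    + intros j _ H1 H2. apply chain_off; lia.
Qed.

Lemma nsqN_Aop_chain_le n t c : (0 < n)%nat -> t (Rn n) = 0 -> t 0%nat ^ 2 <= c ->
  (forall k, (t (S k) - t k) ^ 2 <= c) -> nsqN n (Aop n (chain t)) <= INR (Nn n) * c.
Proof.
  intros Hn Hend H0 Hstep. unfold nsqN. rewrite <- sumN_const. apply sumN_le.
  intros [|k] Hk.
  - rewrite Aop_chain_0 by (unfold Rn; lia). exact H0.
  - rewrite Aop_chain_S by assumption. apply Hstep.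
Qed.

Definition tent (n r : nat) : R :=
  if Nat.ltb r n then (INR r + 1) / INR n else (2 * INR n - INR r) / INR n.

Lemma tent_range n r : (0 < n)%nat -> (r < Rn n)%nat -> 0 <= tent n r <= 1.
Proof.
  intros Hn Hr. unfold Rn in Hr. assert (0 < INR n) by (apply lt_0_INR; exact Hn).
  unfold tent. destruct (Nat.ltb_spec r n); apply div_unit_interval; try assumption.
  - assert (INR r + 1 <= INR n) by (rewrite <- S_INR; apply le_INR; lia).
    pose proof (pos_INR r). lra.
  - assert (INR r + 1 <= 2 * INR n)
      by (rewrite <- S_INR; replace (2 * INR n) with (INR (2 * n))
            by (rewrite mult_INR; simpl; lra); apply le_INR; lia).
    assert (INR n <= INR r) by (apply le_INR; lia). lra.
Qed.

Lemma tent_0 n : (0 < n)%nat -> tent n 0 = 1 / INR n.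
Proof. intros Hn. unfold tent. rewrite (proj2 (Nat.ltb_lt 0 n) Hn). simpl. lra. Qed.

Lemma tent_end n : tent n (Rn n) = 0.
Proof.
  unfold tent, Rn. rewrite (proj2 (Nat.ltb_ge (2 * n) n)) by lia.
  rewrite mult_INR. simpl. unfold Rdiv. ring.
Qed.

Lemma tent_step n k : (0 < n)%nat -> (tent n (S k) - tent n k) ^ 2 <= 1 / INR n ^ 2.
Proof.
  intros Hn. assert (0 < INR n) by (apply lt_0_INR; exact Hn).
  unfold tent. rewrite S_INR.
  destruct (Nat.ltb_spec (S k) n), (Nat.ltb_spec k n); try lia;
    apply sq_diff_div_le; try assumption.
  - ring_simplify. lra.
  - assert (INR k + 1 = INR n) by (rewrite <- S_INR; f_equal; lia).
    replace (2 * INR n - (INR k + 1) - (INR k + 1)) with 0 by lra. lra.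
  - ring_simplify. lra.
Qed.

Lemma sumN_tent_sq n : (0 < n)%nat ->
  sumN (Rn n) (fun r => tent n r ^ 2) = (INR n + 1) * (2 * INR n + 1) / (3 * INR n).
Proof.
  intros Hn. assert (0 < INR n) by (apply lt_0_INR; exact Hn).
  unfold Rn. replace (2 * n)%nat with (n + n)%nat by lia. rewrite sumN_add.
  rewrite (sumN_ext n (fun r => tent n r ^ 2) (fun k => / INR n ^ 2 * (INR k + 1) ^ 2)).
  2:{ intros i Hi. unfold tent. rewrite (proj2 (Nat.ltb_lt i n) Hi). field. lra. }
  rewrite (sumN_ext n (fun k => tent n (n + k) ^ 2) (fun k => / INR n ^ 2 * (INR n - INR k) ^ 2)).
  2:{ intros i Hi. unfold tent. rewrite (proj2 (Nat.ltb_ge (n + i) n)) by lia.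
      rewrite plus_INR. field. lra. }
  rewrite !sumN_scal, sumN_sq_succ, sumN_sq_rev. field. lra.
Qed.

Lemma admissible_le n l : (0 < n)%nat -> admissible n l ->
  l <= 3 / (2 * INR n * (INR n + 1)).
Proof.
  intros Hn Hl. assert (0 < INR n) by (apply lt_0_INR; exact Hn).
  pose proof (admissible_test n l (chain (tent n)) Hl
                (chain_inB n _ (fun r => tent_range n r Hn))) as Htest.
  rewrite dist2_yzero_chain, sumN_tent_sq in Htest by exact Hn.
  assert (Hnorm : nsqN n (Aop n (chain (tent n))) <= INR (Nn n) * (1 / INR n ^ 2)).
  { apply nsqN_Aop_chain_le; [exact Hn | apply tent_end | | intros k; now apply tent_step].
    rewrite tent_0 by exact Hn. right. field. lra. }
  rewrite INR_Nn in Hnorm.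
  set (D := 2 * ((INR n + 1) * (2 * INR n + 1) / (3 * INR n))) in Htest.
  assert (HD : 0 < D) by (unfold D; apply Rmult_lt_0_compat; [lra | apply Rdiv_lt_0_compat; nra]).
  apply (Rmult_le_reg_r D); [exact HD |].
  replace (3 / (2 * INR n * (INR n + 1)) * D) with ((2 * INR n + 1) * (1 / INR n ^ 2))
    by (unfold D; field; lra).
  lra.
Qed.

Lemma bound_lt_7_div_sq n : (0 < n)%nat ->
  3 / (2 * INR n * (INR n + 1)) < 7 / INR (Nn n) ^ 2.
Proof.
  intros Hn. assert (1 <= INR n) by (apply (le_INR 1); exact Hn).
  rewrite INR_Nn. apply Rlt_0_minus.
  replace (7 / (2 * INR n + 1) ^ 2 - 3 / (2 * INR n * (INR n + 1))) with
    ((2 * INR n ^ 2 + 2 * INR n - 3) / (2 * INR n * (INR n + 1) * (2 * INR n + 1) ^ 2))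
    by (field; split; nra).
  apply Rdiv_lt_0_compat; nra.
Qed.

Theorem mainTheorem5 (n : nat) (hn : (3 <= n)%nat) :
  exists lstar : R,
    is_lub (admissible n) lstar /\ lstar < 7 / (INR (Nn n)) ^ 2.
Proof.
  assert (Hn : (0 < n)%nat) by lia.
  assert (Hub : is_upper_bound (admissible n) (3 / (2 * INR n * (INR n + 1))))
    by (intros l; exact (admissible_le n l Hn)).
  destruct (completeness (admissible n)) as [lstar Hlub].
  - eexists; exact Hub.
  - exists 0. apply admissible_0.
  - exists lstar. split; [exact Hlub |].
    apply Rle_lt_trans with (1 := proj2 Hlub _ Hub). now apply bound_lt_7_div_sq.
Qed.
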